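(* Let $G=(V,E,t)$ be a threshold graph with type partition $V_1,\dots,V_{\mathrm{nd}}$, and fix $i\in[\mathrm{nd}]$. (i) Let $X\subseteq V$ satisfy $X=D_{G[X]}$, let $Y=Y(X)$, and let $u_{\max}$ be a node of maximum threshold in $X\cap V_i$. If there exists $v\in Y\cap V_i$ with $t(v)\le t(u_{\max})$, then $X'=(X\setminus\{u_{\max}\})\cup\{v\}$ satisfies $X'=D_{G[X']}$ and $|Y(X')|=|Y|$. (ii) Let $Y\subseteq V$ and let $v_{\max}$ be a node of maximum threshold in $Y\cap V_i$. If there exists $u\in D_{G,Y}\cap V_i$ with $t(u)\le t(v_{\max})$, then $Y'=(Y\setminus\{v_{\max}\})\cup\{u\}$ satisfies $|D_{G,Y'}|\le|D_{G,Y}|$.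
   Context: A threshold graph is an undirected graph $G=(V,E,t)$ with threshold function $t:V\to\mathbb{N}$; $\Gamma_G(v)$ denotes the neighborhood of $v$. Given $Y\subseteq V$ (the immunized nodes), the diffusion process in $G$ is the sequence $D_{G,Y}[1]\subseteq D_{G,Y}[2]\subseteq\cdots$ with $D_{G,Y}[1]=\{u\in V\setminus Y: t(u)=0\}$ and $D_{G,Y}[\tau]=D_{G,Y}[\tau-1]\cup\{u\in V\setminus Y: |\Gamma_G(u)\cap D_{G,Y}[\tau-1]|\ge t(u)\}$; it stabilizes, and $D_{G,Y}$ denotes the final set. Write $D_G=D_{G,\emptyset}$. For $X\subseteq V$, $G[X]$ is the induced subgraph with thresholds restricted from $t$, and $Y(X)=\{u\in V\setminus X: |\Gamma_G(u)\cap D_{G[X]}|\ge t(u)\}$. Two nodes $u,v$ have the same type if $\Gamma_G(v)\setminus\{u\}=\Gamma_G(u)\setminus\{v\}$; a type partition $V_1,\dots,V_{\mathrm{nd}}$ is a partition of $V$ into classes whose nodes all have the same type. *)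

From mathcomp Require Import all_boot.
Set Implicit Arguments. Unset Strict Implicit. Unset Printing Implicit Defensive.

Section Threshold.
Variable T : finType.
Variable e : rel T.
Variable t : T -> nat.

Definition simple_graph := symmetric e /\ irreflexive e.

Definition nbhd (v : T) : {set T} := [set w | e v w].

(* One diffusion step in the induced subgraph on vertex set W, with immunized
   set Y:  S |-> S ∪ {u ∈ W \ Y : |Gamma_{G[W]}(u) ∩ S| >= t(u)}. *)
Definition diff_step (W Y S : {set T}) : {set T} :=
  S :|: [set u in W :\: Y | t u <= #|(nbhd u :&: W) :&: S| ].

Definition diff_seq (W Y : {set T}) (tau : nat) : {set T} :=
  iter tau (diff_step W Y) set0.

(* The final (stabilized) set: the chain is increasing in a finite lattice,
   hence stable after #|T| steps. *)
Definition diffusion (W Y : {set T}) : {set T} := diff_seq W Y #|T|.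

Definition D_GY (Y : {set T}) : {set T} := diffusion setT Y.
Definition D_ind (X : {set T}) : {set T} := diffusion X set0.

Definition YX (X : {set T}) : {set T} :=
  [set u | (u \notin X) && (t u <= #|nbhd u :&: D_ind X|)].

Definition same_type (u v : T) : Prop := nbhd v :\ u = nbhd u :\ v.

Definition type_partition (P : {set {set T}}) : Prop :=
  partition P [set: T] /\
  forall C, C \in P -> forall u v, u \in C -> v \in C -> same_type u v.

Definition max_threshold_in (A : {set T}) (u : T) : Prop :=
  u \in A /\ forall w, w \in A -> t w <= t u.

End Threshold.

From mathcomp Require Import all_boot perm.

Set Implicit Arguments.
Unset Strict Implicit.
Unset Printing Implicit Defensive.

(* Two nodes a, b of the same type are swapped by the transposition
   s = (a b), which is a graph automorphism.  Diffusion commutes with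
   automorphisms once the thresholds are transported along s, and lowering
   thresholds can only enlarge the diffused set.  In (i) the transported
   thresholds t o s lie below t on X (only umax changes, to t v <= t umax),
   so X stays self-diffusing and Y(X') is the s-image of Y(X); in (ii) they
   lie above t off Y (only u changes, to t vmax >= t u), so the diffused set
   can only shrink. *)

Section Diffusion.
Variables (T : finType) (e : rel T).
Implicit Types (t : T -> nat) (W X Y : {set T}) (s : {perm T}).

Lemma diff_seqS t W Y n :
  diff_seq e t W Y n.+1 = diff_step e t W Y (diff_seq e t W Y n).
Proof. by []. Qed.

Lemma diff_seq_sub t W Y n : diff_seq e t W Y n \subset W :\: Y.
Proof.
elim: n => [|n IHn]; first exact: sub0set.
rewrite diff_seqS /diff_step subUset IHn.
by apply/subsetP => x; rewrite inE => /andP[].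
Qed.

Lemma diff_seq_threshold t W Y n x :
  x \in diff_seq e t W Y n -> t x <= #|nbhd e x :&: W|.
Proof.
elim: n => [|n IHn]; first by rewrite inE.
rewrite diff_seqS inE => /orP[/IHn //|]; rewrite inE => /andP[_].
by move/leq_trans; apply; rewrite subset_leq_card ?subsetIl.
Qed.

Lemma diff_seq_thresholds_le t1 t2 W Y n :
  {in W :\: Y, forall x, t2 x <= t1 x} ->
  diff_seq e t1 W Y n \subset diff_seq e t2 W Y n.
Proof.
move=> le_t; elim: n => [|n IHn]; first exact: sub0set.
apply/subsetP => x; rewrite !diff_seqS !in_setU !in_set.
case/orP => [/(subsetP IHn)-> //|/andP[xWY le_t1x]]; rewrite xWY /=.
apply/orP; right.
apply: leq_trans (le_t x _) (leq_trans le_t1x _); first by rewrite inE.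
by rewrite subset_leq_card ?setIS.
Qed.

Lemma nbhd_perm s : {mono s : x y / e x y} ->
  forall x, nbhd e x = s @^-1: nbhd e (s x).
Proof. by move=> se x; apply/setP => y; rewrite !inE se. Qed.

Lemma diff_seq_perm s t1 t2 W Y n :
  {mono s : x y / e x y} -> t1 =1 t2 \o s ->
  diff_seq e t1 (s @^-1: W) (s @^-1: Y) n = s @^-1: diff_seq e t2 W Y n.
Proof.
move=> se t12; elim: n => [|n IHn]; first by apply/setP => x; rewrite !inE.
rewrite !diff_seqS IHn; apply/setP => x.
rewrite !inE (nbhd_perm se x) -!preimsetI card_preimset ?t12 //.
exact: perm_inj.
Qed.

Lemma D_ind_perm s t1 t2 X :
  {mono s : x y / e x y} -> t1 =1 t2 \o s ->
  D_ind e t1 (s @^-1: X) = s @^-1: D_ind e t2 X.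
Proof.
move=> se t12; rewrite /D_ind /diffusion -{1}(preimset0 s).
exact: diff_seq_perm.
Qed.

Lemma D_GY_perm s t1 t2 Y :
  {mono s : x y / e x y} -> t1 =1 t2 \o s ->
  D_GY e t1 (s @^-1: Y) = s @^-1: D_GY e t2 Y.
Proof.
move=> se t12; rewrite /D_GY /diffusion -{1}(preimsetT s).
exact: diff_seq_perm.
Qed.

Lemma YX_perm s t1 t2 X :
  {mono s : x y / e x y} -> t1 =1 t2 \o s ->
  YX e t1 (s @^-1: X) = s @^-1: YX e t2 X.
Proof.
move=> se t12; apply/setP => w; rewrite /YX (D_ind_perm _ se t12) !inE t12.
by rewrite (nbhd_perm se w) -preimsetI card_preimset //; apply: perm_inj.
Qed.

Lemma same_type_adj a b y :
  same_type e a b -> y != a -> y != b -> e a y = e b y.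
Proof.
by move/setP/(_ y); rewrite !inE => + ya yb; rewrite ya yb.
Qed.

Hypothesis simple_e : simple_graph e.

Lemma same_type_tperm_mono a b :
  same_type e a b -> {mono tperm a b : x y / e x y}.
Proof.
case: simple_e => e_sym e_irr st x y.
have adj := same_type_adj st.
case: tpermP => [->|->|/eqP xa /eqP xb]; case: tpermP => [->|->|/eqP ya /eqP yb];
  rewrite ?e_irr ?[e b a]e_sym ?(adj y) ?[e x _]e_sym ?(adj x) //.
Qed.

Lemma nbhd_same_type_sub a b W :
  same_type e a b -> b \notin W -> nbhd e a :&: W \subset nbhd e b :&: W.
Proof.
case: simple_e => _ e_irr st bW; apply/subsetP => y; rewrite !inE.
case/andP=> ay yW; rewrite yW andbT -(same_type_adj st) //.
  by apply: contraTneq ay => ->; rewrite e_irr.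
by apply: contraNneq bW => <-.
Qed.

End Diffusion.

Lemma tperm_preimset (T : finType) (A : {set T}) a b :
  a \in A -> b \notin A -> (A :\ a) :|: [set b] = tperm a b @^-1: A.
Proof.
move=> aA bA; apply/setP => x; rewrite !inE.
case: tpermP => [->|->|/eqP xa /eqP xb]; rewrite ?eqxx ?orbT ?aA //=.
  by rewrite (negbTE bA); apply: contraNF bA => /eqP <-.
by rewrite xa (negbTE xb) orbF.
Qed.

Section Exchange.
Variables (T : finType) (e : rel T) (t : T -> nat).
Hypothesis simple_e : simple_graph e.

Lemma exchange_active_node (X : {set T}) (umax v : T) :
  same_type e umax v -> X = D_ind e t X -> umax \in X ->
  v \in YX e t X -> t v <= t umax ->
  let X' := (X :\ umax) :|: [set v] in
  X' = D_ind e t X' /\ #|YX e t X'| = #|YX e t X|.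
Proof.
move=> st XD umX vY tv X'.
move: (vY); rewrite inE -XD => /andP[vX tvN].
set s := tperm umax v; have s_mono := same_type_tperm_mono simple_e st.
have t_s : t =1 (t \o s) \o s by move=> x /=; rewrite tpermK.
have X'E : X' = s @^-1: X by exact: tperm_preimset.
have Ds : D_ind e (t \o s) X = X.
  apply/eqP; rewrite eqEsubset; apply/andP; split.
    by have := diff_seq_sub e (t \o s) X set0 #|T|; rewrite setD0.
  rewrite {1}XD; apply: diff_seq_thresholds_le => x; rewrite setD0 /s /= => xX.
  by case: tpermP => [->|xv|] //; move: xX; rewrite xv (negbTE vX).
have YXs : YX e (t \o s) X = YX e t X.
  apply/setP => w; rewrite !inE Ds -XD /s /=.
  case: tpermP => [->|->|//]; first by rewrite umX.
  rewrite vX tvN /=.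
  have umN : t umax <= #|nbhd e umax :&: X|.
    by move: umX; rewrite {1}XD => /diff_seq_threshold.
  exact: leq_trans umN (subset_leq_card (nbhd_same_type_sub simple_e st vX)).
split; first by rewrite X'E (D_ind_perm _ s_mono t_s) Ds.
by rewrite X'E (YX_perm _ s_mono t_s) YXs card_preimset //; apply: perm_inj.
Qed.

Lemma exchange_immunized_node (Y : {set T}) (vmax u : T) :
  same_type e vmax u -> vmax \in Y ->
  u \in D_GY e t Y -> t u <= t vmax ->
  #|D_GY e t ((Y :\ vmax) :|: [set u])| <= #|D_GY e t Y|.
Proof.
move=> st vmY uD tu.
have uY : u \notin Y.
  by have := subsetP (diff_seq_sub _ _ _ _ _) _ uD; rewrite !inE andbT.
set s := tperm vmax u; have s_mono := same_type_tperm_mono simple_e st.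
have t_s : t =1 (t \o s) \o s by move=> x /=; rewrite tpermK.
rewrite tperm_preimset // (D_GY_perm _ s_mono t_s) card_preimset; last exact: perm_inj.
apply/subset_leq_card/diff_seq_thresholds_le => x; rewrite !inE /s /=.
by case: tpermP => [->|->|//]; rewrite ?vmY.
Qed.

End Exchange.

Theorem proposition3 (T : finType) (e : rel T) (t : T -> nat)
  (P : {set {set T}}) (Vi : {set T}) :
  simple_graph e -> type_partition e P -> Vi \in P ->
  (forall (X : {set T}) (umax v : T),
      X = D_ind e t X ->
      max_threshold_in t (X :&: Vi) umax ->
      v \in YX e t X :&: Vi -> t v <= t umax ->
      let X' := (X :\ umax) :|: [set v] in
      X' = D_ind e t X' /\ #|YX e t X'| = #|YX e t X|) /\
  (forall (Y : {set T}) (vmax u : T),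
      max_threshold_in t (Y :&: Vi) vmax ->
      u \in D_GY e t Y :&: Vi -> t u <= t vmax ->
      let Y' := (Y :\ vmax) :|: [set u] in
      #|D_GY e t Y'| <= #|D_GY e t Y|).
Proof.
move=> simple_e [_ Vi_types] ViP; split.
- move=> X umax v XD [/setIP[umX umVi] _] /setIP[vY vVi].
  exact: exchange_active_node (Vi_types _ ViP _ _ umVi vVi) XD umX vY.
- move=> Y vmax u [/setIP[vmY vmVi] _] /setIP[uD uVi].
  exact: exchange_immunized_node (Vi_types _ ViP _ _ vmVi uVi) vmY uD.
Qed.
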